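(* Let $n\ge 4$ be even and consider the $[\![n,n-2,2]\!]$ code. Let $G = \tfrac{i}{\sqrt2}(X+Y)$. Let $V = G^{\otimes n}$ if $n \equiv 0 \pmod 4$ and $V = Z_n G^{\otimes n}$ if $n\equiv 2 \pmod 4$. Then $V$ preserves the code space, and, up to a logical Pauli operator and a global phase, acts on the code space as the product of logical $\mathrm{CZ}$ gates between every pair of distinct encoded qubits, $\prod_{1\le i<j\le n-2}\overline{\mathrm{CZ}}_{i,j}$.
   Context: For even $n$, the $[\![n,n-2,2]\!]$ code is the stabilizer code on $n$ qubits with stabilizer generators $X^{\otimes n}$ and $Z^{\otimes n}$, with logical operators $\bar X_j = X_1X_{j+1}$ and $\bar Z_j = Z_{j+1}Z_n$ for $j=1,\dots,n-2$. $\mathrm{CZ} = \mathbb 1 - 2|11\rangle\langle11|$. *)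

From HB Require Import structures.
From mathcomp Require Import all_boot all_order all_algebra all_field.
Set Implicit Arguments. Unset Strict Implicit. Unset Printing Implicit Defensive.
Import Order.TTheory GRing.Theory Num.Theory.
Local Open Scope ring_scope.

(* Computational basis of n qubits: bit strings x : 'I_n -> bool.
   Qubits are indexed 0..n-1 (paper's qubit k is index k-1). *)
Definition basis (n : nat) := {ffun 'I_n -> bool}.
Definition state (n : nat) := basis n -> algC.
Definition op (n : nat) := basis n -> basis n -> algC.
Definition gate := bool -> bool -> algC.

Definition Ig : gate := fun a b => if a == b then 1 else 0.
Definition Xg : gate := fun a b => if a != b then 1 else 0.
Definition Yg : gate := fun a b =>
  if a == b then 0 else if a then 'i else - 'i.
Definition Zg : gate := fun a b => if a == b then (if a then -1 else 1) else 0.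
Definition Gg : gate := fun a b => 'i / sqrtC 2%:R * (Xg a b + Yg a b).

Definition apply n (A : op n) (psi : state n) : state n :=
  fun x => \sum_(y : basis n) A x y * psi y.
Definition opmul n (A B : op n) : op n :=
  fun x y => \sum_(z : basis n) A x z * B z y.
Definition opid n : op n := fun x y => if x == y then 1 else 0.
Arguments opid n : clear implicits.
Definition opadd n (A B : op n) : op n := fun x y => A x y + B x y.
Definition opscale n (c : algC) (A : op n) : op n := fun x y => c * A x y.

Definition tensor n (g : 'I_n -> gate) : op n :=
  fun x y => \prod_(k : 'I_n) g k (x k) (y k).
Definition onq n (k : nat) (g : gate) : op n :=
  tensor (fun l : 'I_n => if nat_of_ord l == k then g else Ig).
Arguments onq n k g : clear implicits.

(* the [[n,n-2,2]] code: stabilizers X^n and Z^n, code space = +1 eigenspace *)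
Definition inCode n (psi : state n) : Prop :=
  (forall x, apply (tensor (fun _ => Xg)) psi x = psi x) /\
  (forall x, apply (tensor (fun _ => Zg)) psi x = psi x).

Unset Implicit Arguments.

(* logical operators, j = 1..n-2:  Xbar_j = X_1 X_(j+1), Zbar_j = Z_(j+1) Z_n
   (paper's 1-based qubits; here 0-based: qubits 0, j and j, n-1). *)
Definition Xbar n (j : nat) : op n := opmul (onq n 0%N Xg) (onq n j Xg).
Definition Zbar n (j : nat) : op n := opmul (onq n j Zg) (onq n n.-1 Zg).

(* logical CZ_{i,j} = 1 - 2|11><11| = (1 + Zbar_i + Zbar_j - Zbar_i Zbar_j)/2 *)
Definition CZbar n (i j : nat) : op n :=
  opscale (2%:R)^-1
    (opadd (opadd (opid n) (Zbar n i))
           (opadd (Zbar n j) (opscale (-1) (opmul (Zbar n i) (Zbar n j))))).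

Definition allCZbar n : op n :=
  \big[@opmul n/opid n]_(1 <= i < n.-1) \big[@opmul n/opid n]_(i.+1 <= j < n.-1)
     CZbar n i j.

Definition logPauli n (a b : nat -> bool) : op n :=
  \big[@opmul n/opid n]_(1 <= j < n.-1)
     opmul (if a j then Xbar n j else opid n) (if b j then Zbar n j else opid n).

Definition Vop n : op n :=
  if (n %% 4 == 0)%N then tensor (fun _ => Gg)
  else opmul (onq n n.-1 Zg) (tensor (fun _ => Gg)).

From HB Require Import structures.
From mathcomp Require Import all_boot all_order all_algebra all_field.
From mathcomp Require Import zify ring.
Import Order.TTheory GRing.Theory Num.Theory.
Local Open Scope ring_scope.
Set Implicit Arguments. Unset Strict Implicit. Unset Printing Implicit Defensive.

(* All operators involved are monomial in the computational basis: V sends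
   |x> to a phase times the complementary string, and the logical Z and CZ
   gates are diagonal.  A code state satisfies psi (~x) = psi x and vanishes
   on strings of odd weight, so it suffices to compare phases on even-weight
   x.  With logical bits u_j = x_j + x_(n-1) and w = u_1 + ... + u_(n-2),
   the phase of V is G01^n i^|x| (times (-1)^x_(n-1) when n = 2 mod 4), and
   a parity count shows i^|x| (-1)^(x_(n-1) n/2) = (-1)^C(w+1,2).  Since
   C(w+1,2) = w + C(w,2), this is the eigenvalue of Zbar_1...Zbar_(n-2)
   times all the CZbar_(i,j). *)

Section Monomial.
Variable n : nat.
Implicit Types (A B : op n) (x y : basis n).

Definition monomial A (h : basis n -> basis n) (d : basis n -> algC) :=
  forall x y, A x y = if y == h x then d x else 0.

Lemma eq_monomial A h d h' d' : h =1 h' -> d =1 d' ->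
  monomial A h d -> monomial A h' d'.
Proof. by move=> eh ed hA x y; rewrite hA eh ed. Qed.

Lemma apply_monomial A h d psi x : monomial A h d -> apply A psi x = d x * psi (h x).
Proof.
move=> hA; rewrite /apply (bigD1 (h x)) //= hA eqxx big1 ?addr0 // => y /negbTE hy.
by rewrite hA hy mul0r.
Qed.

Lemma opmul_monomial A B d h dB : monomial A id d -> monomial B h dB ->
  monomial (opmul A B) h (fun x => d x * dB x).
Proof.
move=> hA hB x y; rewrite /opmul (bigD1 x) //= hA eqxx big1 ?addr0.
  by rewrite hB; case: eqP; rewrite ?mulr0.
by move=> z /negbTE hz; rewrite hA /= hz mul0r.
Qed.

Lemma opid_monomial : monomial (opid n) id (fun _ => 1).
Proof. by move=> x y; rewrite /opid eq_sym. Qed.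

Lemma opadd_monomial A B dA dB : monomial A id dA -> monomial B id dB ->
  monomial (opadd A B) id (fun x => dA x + dB x).
Proof. by move=> hA hB x y; rewrite /opadd hA hB; case: eqP; rewrite ?addr0. Qed.

Lemma opscale_monomial c A dA : monomial A id dA ->
  monomial (opscale c A) id (fun x => c * dA x).
Proof. by move=> hA x y; rewrite /opscale hA; case: eqP; rewrite ?mulr0. Qed.

Lemma big_opmul_monomial (I : eqType) (r : seq I) (F : I -> op n) dF :
  (forall i, i \in r -> monomial (F i) id (dF i)) ->
  monomial (\big[@opmul n/opid n]_(i <- r) F i) id (fun x => \prod_(i <- r) dF i x).
Proof.
elim: r => [|a r IH] hF.
  by rewrite big_nil; apply: eq_monomial opid_monomial => // x; rewrite big_nil.
rewrite big_cons; apply: eq_monomial (opmul_monomial (hF a _) (IH _)) => //.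
- by move=> x; rewrite big_cons.
- exact: mem_head.
- by move=> i ri; apply: hF; rewrite inE ri orbT.
Qed.

Lemma tensor_monomial (g : 'I_n -> gate) (f : bool -> bool) (e : 'I_n -> bool -> algC) :
  (forall k a b, g k a b = if b == f a then e k a else 0) ->
  monomial (tensor g) (fun x => [ffun k => f (x k)]) (fun x => \prod_k e k (x k)).
Proof.
move=> hg x y; rewrite /tensor; case: eqP => [->|/eqP hy].
  by apply: eq_bigr => k _; rewrite hg ffunE eqxx.
have [k hk] : exists k, y k != f (x k).
  apply/existsP; apply: contraR hy => /existsPn h; apply/eqP/ffunP => k.
  by rewrite ffunE; apply/eqP/negPn.
by rewrite (bigD1 k) //= hg (negbTE hk) mul0r.
Qed.

End Monomial.

Lemma prodr_sign (I : Type) (r : seq I) (P : pred I) (F : I -> nat) :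
  \prod_(i <- r | P i) (-1 : algC) ^+ F i = (-1) ^+ (\sum_(i <- r | P i) F i)%N.
Proof. by rewrite (big_morph _ (exprD (-1)) (expr0 (-1))). Qed.

Section Bits.
Variable n : nat.
Implicit Types x : basis n.

(* [bit x j] is [false] for [j >= n]. *)
Definition bit x (j : nat) : bool := [exists i : 'I_n, (val i == j) && x i].

Lemma bitE x (i : 'I_n) : bit x i = x i.
Proof.
apply/existsP/idP => [[j /andP[/eqP /val_inj -> //]]|xi].
by exists i; rewrite eqxx.
Qed.

Definition flip x : basis n := [ffun k => ~~ x k].

Lemma bit_flip x j : (j < n)%N -> bit (flip x) j = ~~ bit x j.
Proof. by move=> lt_jn; rewrite -[j]/(val (Ordinal lt_jn)) !bitE ffunE. Qed.

Definition weight x : nat := (\sum_k x k)%N.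

Lemma weight_bits x : weight x = (\sum_(0 <= k < n) bit x k)%N.
Proof. by rewrite big_mkord; apply: eq_bigr => k _; rewrite bitE. Qed.

Lemma onq_Zg_monomial j : (j < n)%N -> monomial (onq n j Zg) id (fun x => (-1) ^+ bit x j).
Proof.
move=> lt_jn.
apply: eq_monomial (@tensor_monomial n _ id (fun l a => if val l == j then (-1) ^+ a else 1) _).
- by move=> x; apply/ffunP => k; rewrite ffunE.
- move=> x; rewrite (bigD1 (Ordinal lt_jn)) //= eqxx big1 => [|l].
    by rewrite mulr1 -(bitE x (Ordinal lt_jn)).
  by move=> lj; rewrite ifN //; apply: contra lj => /eqP lj; apply/eqP/val_inj.
- by move=> k a b; case: (val k == j); case: a; case: b.
Qed.

Lemma tensor_Xg_monomial : monomial (tensor (fun _ => Xg)) flip (fun _ => 1).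
Proof.
apply: eq_monomial (@tensor_monomial n (fun _ => Xg) negb (fun _ _ => 1) _) => //.
  by move=> x; rewrite big1.
by move=> k [] [].
Qed.

Lemma tensor_Zg_monomial : monomial (tensor (fun _ => Zg)) id (fun x => (-1) ^+ weight x).
Proof.
apply: eq_monomial (@tensor_monomial n (fun _ => Zg) id (fun _ a => (-1) ^+ a) _).
- by move=> x; apply/ffunP => k; rewrite ffunE.
- by move=> x; rewrite prodr_sign.
- by move=> k [] [].
Qed.

Lemma inCode_flip psi x : inCode psi -> psi (flip x) = psi x.
Proof. by case=> hX _; rewrite -(hX x) (apply_monomial _ _ tensor_Xg_monomial) mul1r. Qed.

Lemma inCode_odd psi x : inCode psi -> odd (weight x) -> psi x = 0.
Proof.
case=> _ /(_ x) + odd_x; rewrite (apply_monomial _ _ tensor_Zg_monomial).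
by rewrite -signr_odd odd_x expr1 mulN1r => /eqP; rewrite eqNr => /eqP.
Qed.

End Bits.

Definition G01 : algC := Gg false true.

Lemma Gg_flip a : Gg a (~~ a) = G01 * 'i ^+ a.
Proof.
case: a; rewrite /G01 /Gg /Xg /Yg /= ?expr0 ?mulr1 // expr1 -[RHS]mulrA.
by congr (_ * _); rewrite mulrDl mul1r mulNr -expr2 sqrCi opprK addrC.
Qed.

Lemma sqr_G01 : G01 ^+ 2 = 'i.
Proof.
rewrite /G01 /Gg /Xg /Yg /= exprMn expr_div_n sqrtCK sqrCi sqrrD sqrrN sqrCi.
by rewrite expr1n mul1r -mulr_natl; field.
Qed.

Lemma norm_G01 : `|G01| = 1.
Proof.
by apply/eqP; rewrite -sqrp_eq1 // -normrX sqr_G01 normCi.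
Qed.

Lemma tensor_Gg_monomial n :
  monomial (tensor (fun _ : 'I_n => Gg)) (@flip n) (fun x => G01 ^+ n * 'i ^+ weight x).
Proof.
apply: eq_monomial (@tensor_monomial n (fun _ => Gg) negb (fun _ a => Gg a (~~ a)) _) => //.
  move=> x; under eq_bigr do rewrite Gg_flip.
  rewrite big_split /= prodr_const card_ord /weight.
  by rewrite (big_morph _ (exprD 'i) (expr0 'i)).
by move=> k [] []; rewrite /Gg /Xg /Yg /= ?addr0 ?mulr0.
Qed.

Lemma signr_odd_eq (R : pzRingType) a b : odd a = odd b -> (-1 : R) ^+ a = (-1) ^+ b.
Proof. by move=> h; rewrite -[LHS]signr_odd h signr_odd. Qed.

Lemma expr_i_even k : ~~ odd k -> 'i ^+ k = (-1 : algC) ^+ k./2.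
Proof. by move=> ev; rewrite -{1}(odd_double_half k) (negbTE ev) -mul2n exprM sqrCi. Qed.

Lemma odd_half_bin2S (b : bool) w : ~~ odd (b + w) -> odd (b + w)./2 = odd 'C(w.+1, 2).
Proof.
elim/ltn_ind: w => [[|[|w]]] IH ev; [by case: b ev {IH} | by case: b ev {IH} |].
have := IH w (ltnW (ltnSn _)).
rewrite !binS !bin1 !bin0 -!divn2; lia.
Qed.

Lemma prod_sign_pairs (u : nat -> bool) a N :
  \prod_(a <= i < N) \prod_(i.+1 <= j < N) (-1 : algC) ^+ (u i && u j)
  = (-1) ^+ 'C(\sum_(a <= j < N) u j, 2).
Proof.
move Ek: (N - a)%N => k; elim: k a Ek => [|k IH] a Ek.
  by rewrite !big_geq //; lia.
have lt_aN : (a < N)%N by lia.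
rewrite big_ltn // [in RHS]big_ltn // IH; last by lia.
rewrite prodr_sign -exprD; congr (_ ^+ _).
have -> : (\sum_(a.+1 <= j < N) (u a && u j) = u a * \sum_(a.+1 <= j < N) u j)%N.
  by case: (u a); rewrite ?mul1n ?mul0n // big1.
by case: (u a); rewrite ?mul1n ?mul0n // add1n binS bin1 addnC.
Qed.

Section Logical.
Variable n : nat.
Implicit Types x : basis n.

Definition logbit x j := bit x j (+) bit x n.-1.
Definition logweight x := (\sum_(1 <= j < n.-1) logbit x j)%N.

Lemma Zbar_monomial j : (j < n)%N -> monomial (Zbar n j) id (fun x => (-1) ^+ logbit x j).
Proof.
move=> lt_jn; have lt_n1n : (n.-1 < n)%N by lia.
apply: eq_monomial (opmul_monomial (onq_Zg_monomial lt_jn) (onq_Zg_monomial lt_n1n)) => // x.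
by rewrite signr_addb.
Qed.

Lemma CZbar_monomial i j : (i < n)%N -> (j < n)%N ->
  monomial (CZbar n i j) id (fun x => (-1) ^+ (logbit x i && logbit x j)).
Proof.
move=> lt_in lt_jn; have Zi := Zbar_monomial lt_in; have Zj := Zbar_monomial lt_jn.
rewrite /CZbar.
apply: eq_monomial (opscale_monomial _ (opadd_monomial
  (opadd_monomial (@opid_monomial n) Zi)
  (opadd_monomial Zj (opscale_monomial _ (opmul_monomial Zi Zj))))) => // x.
by case: (logbit x i); case: (logbit x j); rewrite /= ?expr0 ?expr1; field.
Qed.

Lemma logZ_allCZbar_monomial : (1 < n)%N ->
  monomial (opmul (logPauli n (fun _ => false) (fun _ => true)) (allCZbar n)) id
    (fun x => (-1) ^+ 'C((logweight x).+1, 2)).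
Proof.
move=> lt_1n.
have logZ : monomial (logPauli n (fun _ => false) (fun _ => true)) id
    (fun x => \prod_(1 <= j < n.-1) (1 * (-1) ^+ logbit x j)).
  apply: big_opmul_monomial => j; rewrite mem_index_iota => /andP[_ lt_j].
  by apply: opmul_monomial (@opid_monomial n) (Zbar_monomial _); lia.
have allCZ : monomial (allCZbar n) id (fun x => \prod_(1 <= i < n.-1)
    \prod_(i.+1 <= j < n.-1) (-1) ^+ (logbit x i && logbit x j)).
  apply: big_opmul_monomial => i; rewrite mem_index_iota => /andP[_ lt_i].
  apply: big_opmul_monomial => j; rewrite mem_index_iota => /andP[_ lt_j].
  by apply: CZbar_monomial; lia.
apply: eq_monomial (opmul_monomial logZ allCZ) => // x.
under eq_bigr do rewrite mul1r.
by rewrite prodr_sign prod_sign_pairs -exprD binS bin1 addnC.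
Qed.

Lemma logweight_flip x : (0 < n)%N -> logweight (flip x) = logweight x.
Proof.
move=> n_gt0; apply: eq_big_nat => j /andP[_ lt_j].
by rewrite /logbit !bit_flip ?addNb ?addbN ?negbK //; lia.
Qed.

Lemma sum_logbits x : (1 < n)%N ->
  (\sum_(0 <= k < n) logbit x k = logbit x 0 + logweight x)%N.
Proof.
move=> lt_1n; have n_gt0 : (0 < n)%N by lia.
rewrite big_ltn // -[X in (\sum_(1 <= k < X) _)%N](prednK n_gt0) big_nat_recr /=; last by lia.
by rewrite {3}/logbit addbb addn0.
Qed.

Lemma weight_logbits x :
  if bit x n.-1 then (weight x + \sum_(0 <= k < n) logbit x k = n)%N
  else weight x = (\sum_(0 <= k < n) logbit x k)%N.
Proof.
rewrite weight_bits /logbit; case: (bit x n.-1).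
  rewrite -big_split /= (eq_bigr (fun _ => 1%N)) ?sum_nat_const_nat ?subn0 ?muln1 //.
  by move=> k _; case: (bit x k).
by apply: eq_bigr => k _; rewrite addbF.
Qed.

Definition Vphase x : algC :=
  (if (n %% 4 == 0)%N then 1 else (-1) ^+ bit x n.-1) * (G01 ^+ n * 'i ^+ weight x).

Lemma Vop_monomial : (0 < n)%N -> monomial (Vop n) (@flip n) Vphase.
Proof.
move=> n_gt0; rewrite /Vop /Vphase; case: ifP => _.
  by apply: eq_monomial (@tensor_Gg_monomial n) => // x; rewrite mul1r.
have lt_n1n : (n.-1 < n)%N by lia.
exact: opmul_monomial (onq_Zg_monomial lt_n1n) (@tensor_Gg_monomial n).
Qed.

Lemma Vphase_even_weight x : (1 < n)%N -> ~~ odd n -> ~~ odd (weight x) ->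
  Vphase x = G01 ^+ n * (-1) ^+ 'C((logweight x).+1, 2).
Proof.
move=> lt_1n ev_n ev_x; rewrite /Vphase mulrCA; congr (_ * _).
have := weight_logbits x; rewrite sum_logbits // => split_x.
have ev_logbits : ~~ odd (logbit x 0 + logweight x).
  move: (logbit x 0 + logweight x)%N split_x ev_x => m.
  by case: (bit x n.-1) => split_x; rewrite ?split_x //; lia.
rewrite (expr_i_even ev_x) -(signr_odd_eq _ (odd_half_bin2S ev_logbits)).
move: (weight x) (logbit x 0 + logweight x)%N split_x ev_x ev_logbits => wt m.
case: (bit x n.-1) => split_x ev_wt ev_m; case: ifP => n_mod4;
  rewrite ?mul1r ?expr1 -?exprS; apply: signr_odd_eq; lia.
Qed.

Lemma apply_Vop_inCode psi x : (1 < n)%N -> ~~ odd n -> inCode psi ->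
  apply (Vop n) psi x = G01 ^+ n * (-1) ^+ 'C((logweight x).+1, 2) * psi x.
Proof.
move=> lt_1n ev_n code; rewrite (apply_monomial _ _ (Vop_monomial _)); last by lia.
rewrite inCode_flip //; have [odd_x | ev_x] := boolP (odd (weight x)).
  by rewrite (inCode_odd code odd_x) !mulr0.
by rewrite Vphase_even_weight.
Qed.

End Logical.

Theorem mainTheorem4 (n : nat) (hn : (4 <= n)%N) (heven : ~~ odd n) :
  (forall psi : state n, inCode psi -> inCode (apply (Vop n) psi)) /\
  exists (a b : nat -> bool) (c : algC),
    `|c| = 1 /\
    forall psi : state n, inCode psi ->
      forall x, apply (Vop n) psi x
              = c * apply (opmul (logPauli n a b) (allCZbar n)) psi x.
Proof.
have lt_1n : (1 < n)%N by lia.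
have V_code := fun psi x => @apply_Vop_inCode n psi x lt_1n heven.
split=> [psi code|].
  split=> x.
    rewrite (apply_monomial _ _ (@tensor_Xg_monomial n)) mul1r !V_code //.
    by rewrite logweight_flip ?inCode_flip //; lia.
  rewrite (apply_monomial _ _ (@tensor_Zg_monomial n)) V_code // mulrCA.
  by rewrite -(apply_monomial _ _ (@tensor_Zg_monomial n)) code.2.
exists (fun _ => false), (fun _ => true), (G01 ^+ n); split.
  by rewrite normrX norm_G01 expr1n.
move=> psi code x.
by rewrite V_code // (apply_monomial _ _ (logZ_allCZbar_monomial lt_1n)) mulrA.
Qed.
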